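(* Let $S$ be a set with operations $+,\cdot$ and relation $\le$ satisfying all axioms of a solid except possibly the distributivity axiom (AM4). Then the following are equivalent: (a) for all $x,y,z\in S$, $xy+xz=x(y+z)$ holds if and only if $e(x)(y+z)=e(x)y+e(x)z$ or $R(x)\le R(y)+R(z)$; (b) for all $x,y,z\in S$, $xy+xz=x(y+z)+e(x)y+e(x)z$.
   Context: A solid is a set $S$ with two binary operations $+$ and $\cdot$ (written $xy$) and a binary relation $\le$ satisfying the following axioms (all variables range over $S$). (A1) $+$ is associative and commutative. (A2) For each $x$ there is $e$ with $x+e=x$ such that $e+f=e$ for every $f$ with $x+f=x$; this $e$ is unique and is denoted $e(x)$ (the magnitude of $x$). An element $x$ with $x=e(x)$ is called a magnitude. (A3) For each $x$ there is $s$ with $x+s=e(x)$ and $e(s)=e(x)$; it is unique and denoted $-x$; write $x-y$ for $x+(-y)$. (A4) $e(x+y)=e(x)$ or $e(x+y)=e(y)$. (M1) $\cdot$ is associative and commutative. (M2) For each $x\neq e(x)$ there is $u$ with $xu=x$ such that $uv=u$ for every $v$ with $xv=x$; it is unique and denoted $u(x)$. (M3) For each $x\ne e(x)$ there is $d$ with $xd=u(x)$ and $u(d)=u(x)$; it is unique and denoted $x^{-1}$; write $y/x$ for $yx^{-1}$. (M4) If $x\neq e(x)$ and $y\ne e(y)$ then $u(xy)=u(x)$ or $u(xy)=u(y)$. (O1) $\le$ is a total order (reflexive, antisymmetric, transitive, total); $x<y$ means $x\le y$ and $x\ne y$. (O2) $x\le y\Rightarrow x+z\le y+z$. (O3) $y+e(x)=e(x)\Rightarrow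 (y\le e(x)$ and $-y\le e(x))$. (O4) $(e(x)<x$ and $y\le z)\Rightarrow xy\le xz$. (O5) $e(y)\le y\le z\Rightarrow e(x)y\le e(x)z$. (AM1) For all $x,y$ there is $z$ with $e(x)y=e(z)$. (AM2) $e(xy)=e(x)y+e(y)x$. (AM3) If $x\ne e(x)$ then $e(u(x))=e(x)/x$. (AM4) (distributivity axiom) $xy+xz=x(y+z)+e(x)y+e(x)z$. (AM5) $-(xy)=(-x)y$. (E1) There is $m$ with $m+x=x$ for all $x$; it is unique, called zero and denoted $0$. (E2) There is $u$ with $ux=x$ for all $x$; it is unique, called one and denoted $1$. (E3) There is $M$ with $e(x)+M=M$ for all $x$. (E4) There is $x$ with $e(x)\ne 0$ and $e(x)\ne M$. (E5) For every $x$ there is $a$ with $x=a+e(x)$ and $e(a)=0$. (E6) If $x,y$ are magnitudes with $x<y$, there is $z$ with $z\ne e(z)$ and $x<z<y$. Further notation: $S^*=\{x\in S: x\ne e(x)\}$ (zeroless elements). $x$ is positive if $e(x)\le x$ and negative if $x<e(x)$; $|x|=x$ if $x$ is positive and $|x|=-x$ if $x$ is negative. $x$ is precise if $e(x)=0$. The relative uncertainty $R(x)$ is $e(u(x))$ if $x\ne e(x)$, and $M$ (from (E3)) if $x=e(x)$. *)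

From Stdlib Require Import Classical ClassicalEpsilon.

Set Implicit Arguments.

Section SolidAxioms.
Variable T : Type.
Variables (add mul : T -> T -> T) (le : T -> T -> Prop).
(* e = magnitude, opp = additive inverse, u = multiplicative unity of a
   zeroless element, inv = multiplicative inverse of a zeroless element,
   zero = 0, one = 1, bigM = the element M of (E3). The functions u and inv
   are total but only constrained on zeroless elements. *)
Variables (e opp u inv : T -> T) (zero one bigM : T).

Definition lt (x y : T) : Prop := le x y /\ x <> y.

Record solid_without_AM4 : Prop := {
  A1_assoc : forall x y z, add x (add y z) = add (add x y) z;
  A1_comm  : forall x y, add x y = add y x;
  (* A2 (uniqueness of e(x) follows from the minimality clause) *)
  A2_neutral : forall x, add x (e x) = x;
  A2_min : forall x f, add x f = x -> add (e x) f = e x;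
  A3_inv : forall x, add x (opp x) = e x /\ e (opp x) = e x;
  A3_uniq : forall x s, add x s = e x -> e s = e x -> s = opp x;
  A4 : forall x y, e (add x y) = e x \/ e (add x y) = e y;
  M1_assoc : forall x y z, mul x (mul y z) = mul (mul x y) z;
  M1_comm  : forall x y, mul x y = mul y x;
  (* M2 (uniqueness of u(x) follows from the minimality clause) *)
  M2_neutral : forall x, x <> e x -> mul x (u x) = x;
  M2_min : forall x v, x <> e x -> mul x v = x -> mul (u x) v = u x;
  (* M3 : u(d) is only meaningful for zeroless d *)
  M3_inv : forall x, x <> e x ->
      inv x <> e (inv x) /\ mul x (inv x) = u x /\ u (inv x) = u x;
  M3_uniq : forall x d, x <> e x -> d <> e d ->
      mul x d = u x -> u d = u x -> d = inv x;
  (* M4 : u(xy) is only meaningful for zeroless xy *)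
  M4 : forall x y, x <> e x -> y <> e y ->
      mul x y <> e (mul x y) /\
      (u (mul x y) = u x \/ u (mul x y) = u y);
  O1_refl : forall x, le x x;
  O1_antisym : forall x y, le x y -> le y x -> x = y;
  O1_trans : forall x y z, le x y -> le y z -> le x z;
  O1_total : forall x y, le x y \/ le y x;
  O2 : forall x y z, le x y -> le (add x z) (add y z);
  O3 : forall x y, add y (e x) = e x -> le y (e x) /\ le (opp y) (e x);
  O4 : forall x y z, lt (e x) x -> le y z -> le (mul x y) (mul x z);
  O5 : forall x y z, le (e y) y -> le y z -> le (mul (e x) y) (mul (e x) z);
  AM1 : forall x y, exists z, mul (e x) y = e z;
  AM2 : forall x y, e (mul x y) = add (mul (e x) y) (mul (e y) x);
  AM3 : forall x, x <> e x -> e (u x) = mul (e x) (inv x);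
  AM5 : forall x y, opp (mul x y) = mul (opp x) y;
  E1 : forall x, add zero x = x;
  E2 : forall x, mul one x = x;
  E3 : forall x, add (e x) bigM = bigM;
  E4 : exists x, e x <> zero /\ e x <> bigM;
  E5 : forall x, exists a, x = add a (e x) /\ e a = zero;
  E6 : forall x y, x = e x -> y = e y -> lt x y ->
      exists z, z <> e z /\ lt x z /\ lt z y
}.

Definition relunc (x : T) : T :=
  if excluded_middle_informative (x = e x) then bigM else e (u x).

End SolidAxioms.

From Stdlib Require Import Classical ClassicalEpsilon.

(* (b) => (a): by (b), [x y + x z] is [x (y + z)] plus the magnitude
   [N = e(x) y + e(x) z], so the identity of (a) holds iff [N <= e(x (y + z))], and
   [e(x (y + z))] is the maximum [e(x) (y + z) + e(y) x + e(z) x] of three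
   magnitudes.  Instances of (b) also give [u(w) = 1 + e(u(w))], so units are
   absorbed by magnitudes, [R(x) = e(x) / x], and [R(x) <= R(y)] amounts to
   [e(x) y <= e(y) x].  Hence [R(x) <= R(y) + R(z)] forces [N <= e(x (y + z))],
   while if it fails [N] is below neither [e(y) x] nor [e(z) x], so that
   [N <= e(x (y + z))] means [N <= e(x) (y + z)], i.e. [e(x)] distributes.
   (a) => (b): the right-hand alternative of (a) holds whenever [y] or [z] is a
   magnitude (its relative uncertainty is [M]) and the left one whenever [x] is
   precise, so writing [x = a + e(x)] with [a] precise reduces (b) to
   [A (y + z) <= A y + A z] for magnitudes [A].  Splitting [y, z] into precise
   part and magnitude leaves precise [y, z], where [A (y + z) <= A (2 m) <= A m]
   for [m = max(|y|, |z|)]; here [A 2 <= A], since otherwise (E6) yields a precise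
   element absorbed by [A 2] but not by [A], while halving it with the precise
   element [1/2] shows that it is absorbed by [A]. *)

Section SolidWithoutDistributivity.
Variable T : Type.
Variables (add mul : T -> T -> T) (le : T -> T -> Prop).
Variables (e opp u inv : T -> T) (zero one bigM : T).
Hypothesis Hsolid : solid_without_AM4 add mul le e opp u inv zero one bigM.

Local Notation "x ⊕ y" := (add x y) (at level 50, left associativity).
Local Notation "x ⊗ y" := (mul x y) (at level 40, left associativity).
Local Notation "x ≼ y" := (le x y) (at level 70).
Local Notation "x ≺ y" := (lt le x y) (at level 70).
Local Notation R := (relunc e u bigM).

Definition magnitude (p : T) : Prop := e p = p.
Definition precise (a : T) : Prop := e a = zero.
Definition zeroless (x : T) : Prop := x <> e x.

Lemma add_assoc x y z : x ⊕ (y ⊕ z) = x ⊕ y ⊕ z. Proof. apply (A1_assoc Hsolid). Qed.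
Lemma add_comm x y : x ⊕ y = y ⊕ x. Proof. apply (A1_comm Hsolid). Qed.
Lemma mul_assoc x y z : x ⊗ (y ⊗ z) = x ⊗ y ⊗ z. Proof. apply (M1_assoc Hsolid). Qed.
Lemma mul_comm x y : x ⊗ y = y ⊗ x. Proof. apply (M1_comm Hsolid). Qed.
Lemma le_refl x : x ≼ x. Proof. apply (O1_refl Hsolid). Qed.
Lemma le_antisym x y : x ≼ y -> y ≼ x -> x = y. Proof. apply (O1_antisym Hsolid). Qed.
Lemma le_trans x y z : x ≼ y -> y ≼ z -> x ≼ z. Proof. apply (O1_trans Hsolid). Qed.
Lemma le_total x y : x ≼ y \/ y ≼ x. Proof. apply (O1_total Hsolid). Qed.
Lemma add_le_mono_r x y z : x ≼ y -> x ⊕ z ≼ y ⊕ z. Proof. apply (O2 Hsolid). Qed.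
Lemma add_le_mono_l x y z : x ≼ y -> z ⊕ x ≼ z ⊕ y.
Proof. intro h. rewrite (add_comm z x), (add_comm z y). now apply add_le_mono_r. Qed.

Lemma add_swap x y z : x ⊕ (y ⊕ z) = y ⊕ (x ⊕ z).
Proof. rewrite add_assoc, (add_comm x y), <- add_assoc. reflexivity. Qed.
Lemma add_add_add_comm a b c d : (a ⊕ b) ⊕ (c ⊕ d) = (a ⊕ c) ⊕ (b ⊕ d).
Proof. rewrite <- !add_assoc. f_equal. apply add_swap. Qed.

(** * Magnitudes *)

Lemma add_e x : x ⊕ e x = x. Proof. apply (A2_neutral Hsolid). Qed.
Lemma e_add_e x : e x ⊕ e x = e x. Proof. apply (A2_min Hsolid), add_e. Qed.

Lemma magnitude_e x : magnitude (e x).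
Proof.
  pose proof (add_e (e x)) as h1.
  pose proof (A2_min Hsolid _ (e_add_e x)) as h2.
  rewrite add_comm in h2. unfold magnitude. congruence.
Qed.
Lemma e_e x : e (e x) = e x. Proof. apply magnitude_e. Qed.

Lemma magnitude_add_self p : magnitude p -> p ⊕ p = p.
Proof. intro h. rewrite <- h. apply e_add_e. Qed.

Lemma e_add x y : e (x ⊕ y) = e x ⊕ e y.
Proof.
  assert (h : (x ⊕ y) ⊕ (e x ⊕ e y) = x ⊕ y).
  { rewrite add_add_add_comm, !add_e. reflexivity. }
  pose proof (A2_min Hsolid _ h) as h2.
  destruct (A4 Hsolid x y) as [h3|h3]; rewrite h3 in h2 |- *.
  - rewrite add_assoc, e_add_e in h2. congruence.
  - rewrite add_swap, e_add_e in h2. congruence.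
Qed.

Lemma add_eq_l_iff x f : x ⊕ f = x <-> e x ⊕ f = e x.
Proof.
  split; intro h.
  - now apply (A2_min Hsolid).
  - rewrite <- (add_e x) at 1. rewrite <- add_assoc, h. apply add_e.
Qed.

Lemma magnitude_add p q : magnitude p -> magnitude q -> magnitude (p ⊕ q).
Proof. unfold magnitude. intros hp hq. rewrite e_add, hp, hq. reflexivity. Qed.

Lemma magnitude_add_cases p q : magnitude p -> magnitude q -> p ⊕ q = p \/ p ⊕ q = q.
Proof.
  intros hp hq. pose proof (magnitude_add p q hp hq) as h. unfold magnitude in *.
  destruct (A4 Hsolid p q) as [h1|h1]; rewrite h in h1; [left|right]; congruence.
Qed.

Lemma e_opp x : e (opp x) = e x. Proof. apply (A3_inv Hsolid). Qed.
Lemma add_opp x : x ⊕ opp x = e x. Proof. apply (A3_inv Hsolid). Qed.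

Lemma opp_magnitude p : magnitude p -> opp p = p.
Proof.
  intro h. symmetry. apply (A3_uniq Hsolid).
  - now rewrite magnitude_add_self.
  - reflexivity.
Qed.
Lemma opp_opp x : opp (opp x) = x.
Proof.
  symmetry. apply (A3_uniq Hsolid).
  - rewrite add_comm, add_opp, e_opp. reflexivity.
  - rewrite e_opp. reflexivity.
Qed.
Lemma opp_add x y : opp (x ⊕ y) = opp x ⊕ opp y.
Proof.
  symmetry. apply (A3_uniq Hsolid).
  - rewrite add_add_add_comm, !add_opp, e_add. reflexivity.
  - rewrite !e_add, !e_opp. reflexivity.
Qed.

Lemma zero_add x : zero ⊕ x = x. Proof. apply (E1 Hsolid). Qed.
Lemma add_zero x : x ⊕ zero = x. Proof. rewrite add_comm. apply zero_add. Qed.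
Lemma e_zero : e zero = zero.
Proof. pose proof (add_e zero) as h. now rewrite zero_add in h. Qed.
Lemma magnitude_zero : magnitude zero. Proof. apply e_zero. Qed.

Lemma zero_le_magnitude p : magnitude p -> zero ≼ p.
Proof.
  intro h. rewrite <- h. apply (O3 Hsolid p zero). apply zero_add.
Qed.

Lemma magnitude_le_iff p q : magnitude p -> magnitude q -> (p ≼ q <-> p ⊕ q = q).
Proof.
  intros hp hq. split; intro h.
  - destruct (magnitude_add_cases p q hp hq) as [h1|h1]; auto.
    assert (q ≼ p).
    { rewrite <- hp. apply (O3 Hsolid p q). rewrite hp, add_comm. exact h1. }
    assert (p = q) by (apply le_antisym; auto). subst. now apply magnitude_add_self.
  - rewrite <- hq. apply (O3 Hsolid q p). now rewrite hq.
Qed.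

Lemma magnitude_le_add_l p q : magnitude p -> magnitude q -> p ≼ p ⊕ q.
Proof.
  intros hp hq. apply magnitude_le_iff; auto using magnitude_add.
  rewrite add_assoc, magnitude_add_self; auto.
Qed.
Lemma magnitude_le_add_r p q : magnitude p -> magnitude q -> q ≼ p ⊕ q.
Proof. intros hp hq. rewrite add_comm. now apply magnitude_le_add_l. Qed.

Lemma magnitude_add_le p q r : magnitude p -> magnitude q -> p ≼ r -> q ≼ r -> p ⊕ q ≼ r.
Proof.
  intros hp hq h1 h2. destruct (magnitude_add_cases p q hp hq) as [h|h]; now rewrite h.
Qed.

Lemma not_le_magnitude_add N p q :
  magnitude p -> magnitude q -> ~ N ≼ p -> ~ N ≼ q -> ~ N ≼ p ⊕ q.
Proof.
  intros hp hq h1 h2. destruct (magnitude_add_cases p q hp hq) as [h|h]; now rewrite h.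
Qed.

Lemma add_magnitude_of_le y B : magnitude B -> zero ≼ y -> y ≼ B -> y ⊕ B = B.
Proof.
  intros hB h1 h2. apply le_antisym.
  - rewrite <- (magnitude_add_self B hB) at 2. now apply add_le_mono_r.
  - rewrite <- (zero_add B) at 1. now apply add_le_mono_r.
Qed.

Lemma le_magnitude_of_add p y : magnitude p -> y ⊕ p = p -> y ≼ p /\ opp y ≼ p.
Proof. intros hp h. pose proof (O3 Hsolid p y) as h2. rewrite hp in h2. auto. Qed.

Lemma add_magnitude_of_abs_le y B :
  magnitude B -> e y ≼ B -> y ≼ B -> opp y ≼ B -> y ⊕ B = B.
Proof.
  intros hB h0 h1 h2.
  assert (heB : e y ⊕ B = B) by (apply magnitude_le_iff; auto using magnitude_e).
  apply le_antisym.
  - rewrite <- (magnitude_add_self B hB) at 2. now apply add_le_mono_r.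
  - pose proof (add_le_mono_r _ _ (y ⊕ B) h2) as h.
    rewrite add_assoc, (add_comm (opp y)), add_opp, heB in h.
    rewrite add_swap, magnitude_add_self in h; auto.
Qed.

Lemma e_le_e_bigM x : e x ≼ e bigM.
Proof.
  apply magnitude_le_iff; try apply magnitude_e.
  rewrite <- (e_e x) at 1. rewrite <- e_add, (E3 Hsolid x). reflexivity.
Qed.

Lemma opp_ge_e_of_le_e a : a ≼ e a -> e a ≼ opp a.
Proof.
  intro h. pose proof (add_le_mono_r _ _ (opp a) h) as h2. rewrite add_opp in h2.
  rewrite add_comm, <- e_opp, add_e, e_opp in h2. exact h2.
Qed.

(** * Multiplication by magnitudes *)

Lemma magnitude_e_mul x y : magnitude (e x ⊗ y).
Proof. destruct (AM1 Hsolid x y) as [z hz]. rewrite hz. apply magnitude_e. Qed.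
Lemma magnitude_mul_l p y : magnitude p -> magnitude (p ⊗ y).
Proof. intro hp. rewrite <- hp. apply magnitude_e_mul. Qed.
Lemma magnitude_mul_r p y : magnitude p -> magnitude (y ⊗ p).
Proof. intro hp. rewrite mul_comm. now apply magnitude_mul_l. Qed.

Lemma one_mul x : one ⊗ x = x. Proof. apply (E2 Hsolid). Qed.
Lemma mul_one x : x ⊗ one = x. Proof. rewrite mul_comm. apply one_mul. Qed.
Lemma e_mul x y : e (x ⊗ y) = e x ⊗ y ⊕ e y ⊗ x. Proof. apply (AM2 Hsolid). Qed.

Lemma e_mul_le x y : e x ⊗ y ≼ e (x ⊗ y).
Proof.
  apply magnitude_le_iff; [apply magnitude_e_mul | apply magnitude_e |].
  rewrite e_mul, add_assoc, magnitude_add_self; auto. apply magnitude_e_mul.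
Qed.

Lemma opp_mul_l x y : opp (x ⊗ y) = opp x ⊗ y. Proof. apply (AM5 Hsolid). Qed.
Lemma mul_opp_r x y : x ⊗ opp y = opp (x ⊗ y).
Proof. rewrite mul_comm, <- opp_mul_l, mul_comm. reflexivity. Qed.
Lemma magnitude_mul_opp p y : magnitude p -> p ⊗ opp y = p ⊗ y.
Proof. intro hp. rewrite mul_opp_r. apply opp_magnitude. now apply magnitude_mul_l. Qed.

Lemma e_lt_opp_of_le_e x : x ≼ e x -> zeroless x -> e (opp x) ≺ opp x.
Proof.
  intros h1 h2. split.
  - rewrite e_opp. now apply opp_ge_e_of_le_e.
  - intro h. apply h2. rewrite <- (opp_opp x) at 1. rewrite <- h, e_opp.
    apply opp_magnitude, magnitude_e.
Qed.

Lemma e_trichotomy x : e x ≺ x \/ x = e x \/ x ≺ e x.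
Proof.
  destruct (classic (x = e x)) as [h|h]; auto.
  destruct (le_total (e x) x) as [h1|h1]; [left|right; right]; split; auto.
Qed.

Lemma mul_le_mono_magnitude x p q : magnitude p -> magnitude q -> p ≼ q -> x ⊗ p ≼ x ⊗ q.
Proof.
  intros hp hq h. destruct (e_trichotomy x) as [hx|[hx|hx]].
  - now apply (O4 Hsolid).
  - rewrite hx. apply (O5 Hsolid); auto. rewrite hp. apply le_refl.
  - pose proof (O4 Hsolid p q (e_lt_opp_of_le_e x (proj1 hx) (proj2 hx)) h) as h2.
    rewrite <- !opp_mul_l, !opp_magnitude in h2; auto using magnitude_mul_r.
Qed.

Lemma mul_add_magnitude x p q :
  magnitude p -> magnitude q -> x ⊗ (p ⊕ q) = x ⊗ p ⊕ x ⊗ q.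
Proof.
  intros hp hq. symmetry.
  destruct (magnitude_add_cases p q hp hq) as [h|h]; rewrite h.
  - assert (q ≼ p) by (apply magnitude_le_iff; auto; now rewrite add_comm).
    rewrite add_comm. apply magnitude_le_iff; auto using magnitude_mul_r, mul_le_mono_magnitude.
  - assert (p ≼ q) by (now apply magnitude_le_iff).
    apply magnitude_le_iff; auto using magnitude_mul_r, mul_le_mono_magnitude.
Qed.

Lemma magnitude_mul_le_add_magnitude A z p :
  magnitude A -> magnitude p -> A ⊗ z ≼ A ⊗ (z ⊕ p).
Proof.
  intros hA hp.
  assert (hle : forall y, y ≼ y ⊕ p).
  { intro y. rewrite <- (add_zero y) at 1. now apply add_le_mono_l, zero_le_magnitude. }
  rewrite <- hA. destruct (e_trichotomy z) as [hz|[hz|hz]].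
  - apply (O5 Hsolid); auto. apply hz.
  - apply (O5 Hsolid); auto. rewrite <- hz. apply le_refl.
  - rewrite <- (magnitude_mul_opp _ z), <- (magnitude_mul_opp _ (z ⊕ p)), opp_add,
      (opp_magnitude p hp) by apply magnitude_e.
    apply (O5 Hsolid); auto. apply (e_lt_opp_of_le_e z); apply hz.
Qed.

Lemma zeroless_one : zeroless one.
Proof.
  intro h1.
  assert (hall : forall x, magnitude x).
  { intro x. rewrite <- (one_mul x), h1. apply magnitude_e_mul. }
  destruct (E4 Hsolid) as [x0 [h0 _]].
  assert (hl : zero ≺ e x0).
  { split. apply zero_le_magnitude, magnitude_e. intro h. now apply h0. }
  destruct (E6 Hsolid (eq_sym e_zero) (eq_sym (e_e x0)) hl) as [z [hz _]].
  apply hz. symmetry. apply hall.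
Qed.

Lemma e_one_le_one : e one ≼ one.
Proof.
  destruct (le_total (e one) one) as [h|h]; auto.
  pose proof (e_lt_opp_of_le_e one h zeroless_one) as hn.
  pose proof (O4 Hsolid one (e one) hn h) as h2.
  rewrite mul_one, <- opp_mul_l, one_mul, (opp_magnitude (e one) (magnitude_e one)) in h2.
  exfalso. apply (proj2 hn). rewrite e_opp in *. apply le_antisym; auto. apply hn.
Qed.

Lemma e_one : e one = zero.
Proof.
  destruct (E5 Hsolid one) as [a [ha1 ha2]].
  set (B := e one) in *.
  assert (hB : magnitude B) by apply magnitude_e.
  assert (hnot : ~ a ≼ B).
  { intro h. apply zeroless_one. apply le_antisym; [| apply e_one_le_one].
    rewrite ha1 at 1. fold B. rewrite <- (magnitude_add_self B hB) at 2.
    now apply add_le_mono_r. }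
  assert (hBa : B ≼ a) by (destruct (le_total a B); tauto).
  assert (h1 : one ≼ a ⊕ a) by (rewrite ha1 at 1; now apply add_le_mono_l).
  pose proof (O5 Hsolid one one (a ⊕ a) e_one_le_one h1) as h2. rewrite mul_one in h2.
  pose proof (e_mul_le one (a ⊕ a)) as h3. rewrite one_mul in h3.
  rewrite e_add, ha2, (magnitude_add_self zero magnitude_zero) in h3.
  apply le_antisym. eapply le_trans; eauto. now apply zero_le_magnitude.
Qed.

Lemma zero_lt_one : zero ≺ one.
Proof.
  rewrite <- e_one. split. apply e_one_le_one. intro h. now apply zeroless_one.
Qed.

Lemma one_le_one_add_e x : one ≼ one ⊕ e x.
Proof.
  rewrite <- (add_zero one) at 1. apply add_le_mono_l, zero_le_magnitude, magnitude_e.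
Qed.

Lemma zero_mul_precise a : precise a -> zero ⊗ a = zero.
Proof.
  intro h. apply le_antisym.
  - pose proof (e_mul_le one a) as h1. rewrite e_one, one_mul, h in h1. exact h1.
  - apply zero_le_magnitude. rewrite <- e_zero. apply magnitude_e_mul.
Qed.

Lemma e_lt_of_precise a : precise a -> zero ≼ a -> a <> zero -> e a ≺ a.
Proof. intros h1 h2 h3. unfold precise in h1. rewrite h1. split; auto. Qed.

(** * Units and inverses of zeroless elements *)

Lemma mul_u w : zeroless w -> w ⊗ u w = w. Proof. apply (M2_neutral Hsolid). Qed.
Lemma u_mul_u w : zeroless w -> u w ⊗ u w = u w.
Proof. intro h. apply (M2_min Hsolid); auto. now apply mul_u. Qed.

Lemma zeroless_u w : zeroless w -> zeroless (u w).
Proof.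
  intros hw h. apply hw.
  assert (hm : magnitude (w ⊗ e (u w))) by apply magnitude_mul_r, magnitude_e.
  now rewrite <- h, mul_u in hm.
Qed.

Lemma e_u_mul_u w : zeroless w -> e (u w) ⊗ u w = e (u w).
Proof.
  intro hw. pose proof (e_mul (u w) (u w)) as h. rewrite u_mul_u in h; auto.
  rewrite magnitude_add_self in h; auto using magnitude_e_mul.
Qed.

Lemma e_u_lt_u w : zeroless w -> e (u w) ≺ u w.
Proof.
  intro hw. destruct (e_trichotomy (u w)) as [h|[h|h]]; auto; exfalso.
  - exact (zeroless_u w hw h).
  - pose proof (e_lt_opp_of_le_e _ (proj1 h) (proj2 h)) as hn.
    pose proof (O4 Hsolid _ _ hn (proj1 h)) as h2.
    rewrite <- !opp_mul_l, (u_mul_u w hw), mul_comm, (e_u_mul_u w hw),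
      (opp_magnitude _ (magnitude_e _)) in h2.
    apply (proj2 hn). rewrite e_opp in *. apply le_antisym; auto. apply hn.
Qed.

Lemma zeroless_inv w : zeroless w -> zeroless (inv w). Proof. apply (M3_inv Hsolid). Qed.
Lemma mul_inv w : zeroless w -> w ⊗ inv w = u w. Proof. apply (M3_inv Hsolid). Qed.

Lemma e_u_mul_le_e w : zeroless w -> e (u w) ⊗ w ≼ e w.
Proof.
  intro hw. pose proof (e_mul w (u w)) as h. rewrite mul_u in h; auto.
  rewrite h. apply magnitude_le_add_r; apply magnitude_e_mul.
Qed.

Lemma inv_pos k : e k ≺ k -> e (inv k) ≺ inv k.
Proof.
  intro hk. assert (hkz : zeroless k) by (intro h; apply (proj2 hk); auto).
  set (v := inv k). destruct (e_trichotomy v) as [h|[h|h]]; auto; exfalso.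
  - exact (zeroless_inv k hkz h).
  - pose proof (O4 Hsolid v (e v) hk (proj1 h)) as h2.
    unfold v in h2. rewrite mul_inv in h2; auto.
    assert (h3 : k ⊗ e (inv k) ≼ e (u k)).
    { rewrite (mul_comm k), <- (mul_inv k hkz), (mul_comm k). apply e_mul_le. }
    pose proof (e_u_lt_u k hkz) as hc. apply (proj2 hc).
    apply le_antisym; [apply hc | eapply le_trans; eauto].
Qed.

Lemma relunc_zeroless w : zeroless w -> R w = e (u w).
Proof.
  intro h. unfold relunc.
  destruct (excluded_middle_informative (w = e w)); [now exfalso | reflexivity].
Qed.
Lemma relunc_magnitude p : magnitude p -> R p = bigM.
Proof.
  intro h. unfold relunc.
  destruct (excluded_middle_informative (p = e p)) as [_|h'];
    [reflexivity | exfalso; apply h'; symmetry; exact h].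
Qed.

(** * The element [M] *)

Section UnitsAboveOne.
Hypothesis u_ge_one : forall k, precise k -> k <> zero -> one ≼ u k.

(* For precise [0 < k < e M]: [1 <= u k = k^-1 k <= k^-1 (e M) <= e M], the last
   step because [k^-1 (e M)] is a magnitude. *)
Lemma one_le_e_bigM : one ≼ e bigM.
Proof.
  set (m := e bigM).
  assert (hm0 : m <> zero).
  { intro h. destruct (E4 Hsolid) as [x0 [h0 _]]. apply h0. apply le_antisym.
    rewrite <- h. apply e_le_e_bigM. apply zero_le_magnitude, magnitude_e. }
  assert (hl : zero ≺ m) by (split; [apply zero_le_magnitude, magnitude_e | auto]).
  destruct (E6 Hsolid (eq_sym e_zero) (eq_sym (e_e bigM)) hl) as [z [hz [hz1 hz2]]].
  destruct (E5 Hsolid z) as [k [hk1 hk2]].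
  assert (hkz : k ≼ z).
  { rewrite hk1. rewrite <- (add_zero k) at 1.
    apply add_le_mono_l, zero_le_magnitude, magnitude_e. }
  assert (hk0 : k <> zero) by (intro h; apply hz; rewrite hk1, h, zero_add, e_e; reflexivity).
  assert (hkpos : zero ≼ k).
  { destruct (le_total zero k) as [h|h]; auto. exfalso.
    assert (h1 : z ≼ e z).
    { rewrite hk1 at 1. rewrite <- (zero_add (e z)) at 2. now apply add_le_mono_r. }
    pose proof (add_le_mono_r _ _ (opp z) (proj1 hz1)) as h3. rewrite zero_add, add_opp in h3.
    apply hz. rewrite <- (opp_opp z) at 1.
    rewrite (le_antisym _ _ h3 (opp_ge_e_of_le_e z h1)). apply opp_magnitude, magnitude_e. }
  assert (hkL : e k ≺ k) by (now apply e_lt_of_precise).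
  pose proof (O4 Hsolid k m (inv_pos k hkL) (le_trans _ _ _ hkz (proj1 hz2))) as h2.
  rewrite mul_comm, mul_inv in h2 by (intro h; apply (proj2 hkL); auto).
  assert (h3 : inv k ⊗ m ≼ m).
  { unfold m. rewrite mul_comm. destruct (AM1 Hsolid bigM (inv k)) as [w hw].
    rewrite hw. apply e_le_e_bigM. }
  apply (le_trans _ _ _ (u_ge_one k hk2 hk0)). eapply le_trans; eauto.
Qed.

Lemma add_e_bigM_nonneg a : precise a -> zero ≼ a -> a ⊕ e bigM = e bigM.
Proof.
  intros h1 h2. destruct (classic (a = zero)) as [h|h].
  - rewrite h. apply zero_add.
  - apply add_magnitude_of_le; auto using magnitude_e.
    pose proof (O4 Hsolid one (e bigM) (e_lt_of_precise a h1 h2 h) one_le_e_bigM) as h3.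
    rewrite mul_one in h3. eapply le_trans; [apply h3 |].
    rewrite mul_comm. destruct (AM1 Hsolid bigM a) as [w hw]. rewrite hw. apply e_le_e_bigM.
Qed.

Lemma add_e_bigM_precise a : precise a -> a ⊕ e bigM = e bigM.
Proof.
  intro h1. destruct (le_total zero a) as [h|h].
  - now apply add_e_bigM_nonneg.
  - assert (h2 : zero ≼ opp a).
    { pose proof (opp_ge_e_of_le_e a) as h3. unfold precise in h1. rewrite h1 in h3. auto. }
    assert (h3 : precise (opp a)) by (unfold precise; now rewrite e_opp).
    pose proof (add_e_bigM_nonneg (opp a) h3 h2) as h4.
    rewrite <- (opp_opp a), <- (opp_magnitude (e bigM) (magnitude_e _)) at 1.
    rewrite <- opp_add, h4. apply opp_magnitude, magnitude_e.
Qed.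

Lemma magnitude_bigM : magnitude bigM.
Proof.
  destruct (E5 Hsolid bigM) as [a [h1 h2]]. unfold magnitude.
  rewrite h1 at 2. now rewrite add_e_bigM_precise.
Qed.

Lemma magnitude_le_bigM p : magnitude p -> p ≼ bigM.
Proof. intro hp. rewrite <- hp, <- magnitude_bigM. apply e_le_e_bigM. Qed.

Lemma one_le_bigM : one ≼ bigM.
Proof. rewrite <- magnitude_bigM. apply one_le_e_bigM. Qed.

Lemma magnitude_relunc w : magnitude (R w).
Proof.
  unfold relunc. destruct (excluded_middle_informative (w = e w)).
  - apply magnitude_bigM.
  - apply magnitude_e.
Qed.

End UnitsAboveOne.

Lemma e_mul_add x y z : e (x ⊗ (y ⊕ z)) = e x ⊗ (y ⊕ z) ⊕ (e y ⊗ x ⊕ e z ⊗ x).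
Proof.
  rewrite e_mul, e_add. f_equal.
  rewrite mul_comm, mul_add_magnitude, (mul_comm x (e y)), (mul_comm x (e z));
    auto using magnitude_e.
Qed.

(* [c s] is zeroless by (M4), so it cannot be squeezed between [c (e c) = e c] and [e c]. *)
Lemma le_e_of_mul_add_e c s :
  e c ≺ c -> e c ⊗ c = e c -> e s = e c -> c ⊗ s ⊕ e c = e c -> s ≼ e c.
Proof.
  intros hc hEc hs hcs. set (E := e c) in *.
  destruct (le_total s E) as [h|h]; auto.
  destruct (classic (s = E)) as [h'|h']; [rewrite h'; apply le_refl | exfalso].
  assert (hcz : zeroless c) by (intro h0; apply (proj2 hc); auto).
  assert (hsz : zeroless s) by (unfold zeroless; now rewrite hs).
  pose proof (O4 Hsolid _ _ hc h) as h1. rewrite mul_comm, hEc in h1.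
  pose proof (proj1 (le_magnitude_of_add E _ (magnitude_e c) hcs)) as h2.
  apply (proj1 (M4 Hsolid hcz hsz)).
  rewrite (le_antisym _ _ h2 h1). symmetry. apply magnitude_e.
Qed.

(** * From (b) to (a) *)

Section WeakDistributivity.
Hypothesis weak_distr : forall x y z : T,
  x ⊗ y ⊕ x ⊗ z = x ⊗ (y ⊕ z) ⊕ e x ⊗ y ⊕ e x ⊗ z.

Lemma magnitude_mul_add_le A y z : magnitude A -> A ⊗ (y ⊕ z) ≼ A ⊗ y ⊕ A ⊗ z.
Proof.
  intro hA. pose proof (weak_distr A y z) as h. rewrite hA, <- add_assoc in h.
  apply magnitude_le_iff; auto using magnitude_mul_l, magnitude_add.
Qed.

(* Weak distributivity at [(u w) (1 - u w)] shows that [1 - u w] is absorbed by [e (u w)]. *)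
Lemma u_eq_one_add_e w : zeroless w -> u w = one ⊕ e (u w).
Proof.
  intro hw. pose proof (e_u_lt_u w hw) as hc. pose proof (e_u_mul_u w hw) as hEc.
  pose proof (u_mul_u w hw) as hcc.
  set (c := u w) in *. set (E := e c) in *.
  assert (hE : magnitude E) by apply magnitude_e.
  set (s := one ⊕ opp c).
  assert (hcs : c ⊗ s ⊕ E = E).
  { pose proof (weak_distr c one (opp c)) as h.
    rewrite mul_one, mul_opp_r, hcc, add_opp in h. fold E s in h.
    rewrite mul_one, (magnitude_mul_opp _ c hE), hEc, <- add_assoc,
      (magnitude_add_self E hE) in h.
    symmetry. exact h. }
  assert (hcs' : c ⊗ opp s ⊕ E = E).
  { rewrite mul_opp_r, <- (opp_magnitude E hE) at 1.
    rewrite <- opp_add, hcs. exact (opp_magnitude E hE). }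
  assert (hes : e s = E) by (unfold s; rewrite e_add, e_one, e_opp, zero_add; reflexivity).
  assert (hsE : s ⊕ E = E).
  { apply add_magnitude_of_abs_le; auto.
    - rewrite hes. apply le_refl.
    - now apply le_e_of_mul_add_e.
    - apply le_e_of_mul_add_e; auto. now rewrite e_opp. }
  transitivity (c ⊕ s).
  - rewrite <- (add_e c) at 1. fold E. rewrite <- hsE, add_swap, add_comm, add_e. reflexivity.
  - unfold s. rewrite add_swap, add_opp. reflexivity.
Qed.

Lemma one_le_u w : zeroless w -> one ≼ u w.
Proof.
  intro hw. rewrite (u_eq_one_add_e w hw). apply one_le_one_add_e.
Qed.

Lemma u_ge_one_of_weak_distr k : precise k -> k <> zero -> one ≼ u k.
Proof. intros h1 h2. apply one_le_u. unfold zeroless. now rewrite h1. Qed.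

Lemma not_one_le_e_u w : zeroless w -> ~ one ≼ e (u w).
Proof.
  intros hw h. apply (zeroless_u w hw). rewrite (u_eq_one_add_e w hw) at 1.
  apply add_magnitude_of_le; auto using magnitude_e. apply zero_lt_one.
Qed.

Lemma magnitude_mul_u w p : zeroless w -> magnitude p -> p ⊗ u w = p.
Proof.
  intros hw hp. rewrite (u_eq_one_add_e w hw). set (E := e (u w)).
  assert (hE1 : E ≼ one).
  { destruct (le_total E one) as [h|h]; auto. exfalso. exact (not_one_le_e_u w hw h). }
  apply le_antisym.
  - eapply le_trans; [now apply magnitude_mul_add_le |]. rewrite mul_one.
    apply magnitude_add_le; auto using magnitude_mul_l; [apply le_refl |].
    pose proof (O5 Hsolid p E one) as h. rewrite hp, mul_one in h.
    apply h; auto. unfold E. rewrite e_e. apply le_refl.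
  - rewrite <- (mul_one p) at 1.
    apply magnitude_mul_le_add_magnitude; [exact hp | apply magnitude_e].
Qed.

Lemma not_bigM_le_relunc y : zeroless y -> ~ bigM ≼ R y.
Proof.
  intros hy h. rewrite (relunc_zeroless y hy) in h. apply (not_one_le_e_u y hy).
  eapply le_trans; [apply (one_le_bigM u_ge_one_of_weak_distr) | exact h].
Qed.

Lemma relunc_mul x y : zeroless x -> R x ⊗ (x ⊗ y) = e x ⊗ y.
Proof.
  intro hx. rewrite (relunc_zeroless x hx), (AM3 Hsolid hx), <- mul_assoc,
    (mul_assoc (inv x)), (mul_comm (inv x)), mul_inv, (mul_comm (u x)), mul_assoc,
    magnitude_mul_u; auto using magnitude_e_mul.
Qed.

Lemma e_mul_mul_inv x y :
  zeroless x -> zeroless y -> e x ⊗ y ⊗ (inv x ⊗ inv y) = R x.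
Proof.
  intros hx hy. rewrite (relunc_zeroless x hx), (AM3 Hsolid hx), <- mul_assoc,
    (mul_comm y), mul_assoc, (mul_assoc (e x)), <- (mul_assoc _ _ y), (mul_comm _ y),
    mul_inv, magnitude_mul_u; auto using magnitude_e_mul.
Qed.

Lemma e_mul_le_of_relunc_le x y : R x ≼ R y -> e x ⊗ y ≼ e y ⊗ x.
Proof.
  intro h. destruct (classic (y = e y)) as [hy|hy].
  - pose proof (e_mul_le x y) as h1. rewrite (mul_comm x y) in h1.
    assert (hm : magnitude (y ⊗ x)) by (rewrite hy; apply magnitude_e_mul).
    rewrite hm in h1. now rewrite <- hy.
  - assert (hx : zeroless x).
    { intro hx. rewrite (relunc_magnitude x (eq_sym hx)) in h.
      exact (not_bigM_le_relunc y hy h). }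
    pose proof (mul_le_mono_magnitude (x ⊗ y) _ _ (magnitude_relunc u_ge_one_of_weak_distr x)
      (magnitude_relunc u_ge_one_of_weak_distr y) h) as h2.
    rewrite (mul_comm _ (R x)), (mul_comm _ (R y)), relunc_mul, (mul_comm x y),
      relunc_mul in h2; auto.
Qed.

Lemma relunc_le_of_e_mul_le x y : zeroless x -> e x ⊗ y ≼ e y ⊗ x -> R x ≼ R y.
Proof.
  intros hx h. destruct (classic (y = e y)) as [hy|hy].
  - rewrite (relunc_magnitude y (eq_sym hy)).
    apply magnitude_le_bigM, magnitude_relunc; exact u_ge_one_of_weak_distr.
  - pose proof (mul_le_mono_magnitude (inv x ⊗ inv y) _ _ (magnitude_e_mul x y)
      (magnitude_e_mul y x) h) as h2.
    rewrite mul_comm, e_mul_mul_inv, (mul_comm (inv x)), mul_comm, e_mul_mul_inv in h2; auto.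
Qed.

Lemma magnitude_mul_le_add_mul A y z : magnitude A -> A ⊗ z ≼ A ⊗ (y ⊕ z) ⊕ A ⊗ y.
Proof.
  intro hA. pose proof (magnitude_mul_add_le A (y ⊕ z) (opp y) hA) as h.
  assert (h1 : y ⊕ z ⊕ opp y = z ⊕ e y)
    by (rewrite (add_comm y z), <- add_assoc, add_opp; reflexivity).
  rewrite h1, magnitude_mul_opp in h; auto.
  eapply le_trans; [| exact h]. apply magnitude_mul_le_add_magnitude; auto using magnitude_e.
Qed.

Lemma e_mul_add_le_of_relunc_le x y z :
  R x ≼ R y -> e x ⊗ y ⊕ e x ⊗ z ≼ e (x ⊗ (y ⊕ z)).
Proof.
  intro h. set (A := e x). assert (hA : magnitude A) by apply magnitude_e.
  rewrite e_mul_add. fold A.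
  assert (hyz : magnitude (A ⊗ (y ⊕ z))) by auto using magnitude_mul_l.
  assert (hy : magnitude (e y ⊗ x)) by apply magnitude_e_mul.
  assert (hz : magnitude (e z ⊗ x)) by apply magnitude_e_mul.
  assert (hAy : A ⊗ y ≼ A ⊗ (y ⊕ z) ⊕ (e y ⊗ x ⊕ e z ⊗ x)).
  { eapply le_trans; [now apply e_mul_le_of_relunc_le |].
    eapply le_trans; [apply (magnitude_le_add_l _ _ hy hz) |].
    apply magnitude_le_add_r; auto using magnitude_add. }
  apply magnitude_add_le; auto using magnitude_mul_l.
  eapply le_trans; [apply (magnitude_mul_le_add_mul A y z hA) |].
  apply magnitude_add_le; auto using magnitude_mul_l.
  apply magnitude_le_add_l; auto using magnitude_add.
Qed.

Lemma mul_add_eq_iff x y z :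
  x ⊗ y ⊕ x ⊗ z = x ⊗ (y ⊕ z) <-> e x ⊗ y ⊕ e x ⊗ z ≼ e (x ⊗ (y ⊕ z)).
Proof.
  rewrite weak_distr, <- add_assoc, add_eq_l_iff, add_comm.
  symmetry. apply magnitude_le_iff; auto using magnitude_e, magnitude_add, magnitude_e_mul.
Qed.

Lemma e_mul_add_eq_of_le x y z :
  e x ⊗ y ⊕ e x ⊗ z ≼ e (x ⊗ (y ⊕ z)) -> ~ R x ≼ R y ⊕ R z ->
  e x ⊗ (y ⊕ z) = e x ⊗ y ⊕ e x ⊗ z.
Proof.
  intros hq hc. set (A := e x) in *. set (N := A ⊗ y ⊕ A ⊗ z) in *.
  assert (hA : magnitude A) by apply magnitude_e.
  apply le_antisym; [now apply magnitude_mul_add_le |].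
  destruct (classic (x = e x)) as [hx|hx].
  - rewrite hx, (magnitude_e_mul x) in hq. exact hq.
  - destruct (classic (N ≼ A ⊗ (y ⊕ z))) as [hh|hh]; auto. exfalso.
    assert (hR : forall w, magnitude (R w)) by exact (magnitude_relunc u_ge_one_of_weak_distr).
    assert (hny : ~ N ≼ e y ⊗ x).
    { intro h. apply hc. eapply le_trans; [| apply magnitude_le_add_l; auto].
      apply relunc_le_of_e_mul_le; auto. eapply le_trans; [| exact h].
      apply magnitude_le_add_l; auto using magnitude_mul_l. }
    assert (hnz : ~ N ≼ e z ⊗ x).
    { intro h. apply hc. eapply le_trans; [| apply magnitude_le_add_r; auto].
      apply relunc_le_of_e_mul_le; auto. eapply le_trans; [| exact h].
      apply magnitude_le_add_r; auto using magnitude_mul_l. }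
    rewrite e_mul_add in hq. fold A N in hq.
    revert hq. apply not_le_magnitude_add; auto using magnitude_mul_l, magnitude_add,
      magnitude_e_mul, not_le_magnitude_add.
Qed.

Lemma mul_add_eq_iff_relunc x y z :
  x ⊗ y ⊕ x ⊗ z = x ⊗ (y ⊕ z) <->
  (e x ⊗ (y ⊕ z) = e x ⊗ y ⊕ e x ⊗ z \/ R x ≼ R y ⊕ R z).
Proof.
  rewrite mul_add_eq_iff. split.
  - intro hq. destruct (classic (R x ≼ R y ⊕ R z)) as [hc|hc]; auto.
    left. now apply e_mul_add_eq_of_le.
  - intros [h|h].
    + rewrite <- h, e_mul_add.
      apply magnitude_le_add_l;
        auto using magnitude_mul_l, magnitude_e, magnitude_add, magnitude_e_mul.
    + pose proof (magnitude_relunc u_ge_one_of_weak_distr) as hR.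
      destruct (magnitude_add_cases (R y) (R z) (hR y) (hR z)) as [e1|e1]; rewrite e1 in h.
      * now apply e_mul_add_le_of_relunc_le.
      * rewrite add_comm, (add_comm y z). now apply e_mul_add_le_of_relunc_le.
Qed.

End WeakDistributivity.

(** * From (a) to (b) *)

Definition two : T := one ⊕ one.

Lemma precise_two : precise two.
Proof. unfold precise, two. rewrite e_add, e_one. apply zero_add. Qed.

Lemma one_le_two : one ≼ two.
Proof. unfold two. rewrite <- (add_zero one) at 1. apply add_le_mono_l, zero_lt_one. Qed.

Lemma zeroless_two : zeroless two.
Proof.
  unfold zeroless. rewrite precise_two. intro h. apply (proj2 zero_lt_one).
  apply le_antisym; [apply zero_lt_one | rewrite <- h; apply one_le_two].
Qed.

Lemma magnitude_eq_zero_of_mul_two p : magnitude p -> p ⊗ two = zero -> p = zero.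
Proof.
  intros hp h. pose proof (O5 Hsolid p one two e_one_le_one one_le_two) as h2.
  rewrite hp, mul_one, h in h2. apply le_antisym; auto. now apply zero_le_magnitude.
Qed.

(* Use (E6) to find a zeroless [z] with [D < z < D'] and take its precise part. *)
Lemma precise_absorbed_between D D' : magnitude D -> magnitude D' -> D ≺ D' ->
  exists k, precise k /\ k ⊕ D' = D' /\ k ⊕ D <> D.
Proof.
  intros hD hD' hlt.
  destruct (E6 Hsolid (eq_sym hD) (eq_sym hD') hlt) as [z [hz [hz1 hz2]]].
  destruct (E5 Hsolid z) as [k [hk1 hk2]].
  assert (hzD' : z ⊕ D' = D').
  { apply add_magnitude_of_le; auto; [| apply hz2].
    apply (le_trans _ D); [now apply zero_le_magnitude | apply hz1]. }
  exists k. split; [exact hk2 | split].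
  - assert (hez : e z ⊕ D' = D').
    { pose proof (f_equal e hzD') as h. now rewrite e_add, hD' in h. }
    rewrite <- hez at 1. rewrite add_assoc, <- hk1. exact hzD'.
  - intro hkD. destruct (le_total (e z) D) as [h|h].
    + apply (proj2 hz1). apply le_antisym; [apply hz1 |].
      assert (hzD : z ⊕ D = D).
      { rewrite hk1, <- add_assoc, (proj1 (magnitude_le_iff _ _ (magnitude_e z) hD) h).
        exact hkD. }
      rewrite <- hzD. rewrite <- (add_zero z) at 1. now apply add_le_mono_l, zero_le_magnitude.
    + apply hz. assert (h3 : D ⊕ e z = e z) by (apply magnitude_le_iff; auto using magnitude_e).
      rewrite hk1 at 1. rewrite <- h3, add_assoc, hkD, h3. reflexivity.
Qed.

Lemma precise_abs b : precise b ->
  exists a, (a = b \/ a = opp b) /\ zero ≼ a /\ b ≼ a /\ opp b ≼ a.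
Proof.
  intro hb. destruct (le_total zero b) as [h|h].
  - exists b. repeat split; auto using le_refl.
    eapply le_trans; [| exact h].
    pose proof (add_le_mono_r _ _ (opp b) h) as h2. now rewrite zero_add, add_opp, hb in h2.
  - assert (h2 : zero ≼ opp b).
    { rewrite <- hb. apply opp_ge_e_of_le_e. now rewrite hb. }
    exists (opp b). repeat split; auto using le_refl. eapply le_trans; eauto.
Qed.

Lemma precise_of_abs a b : precise b -> a = b \/ a = opp b -> precise a.
Proof. intros hb [-> | ->]; unfold precise; now rewrite ?e_opp. Qed.

Lemma magnitude_mul_abs A a b : magnitude A -> a = b \/ a = opp b -> A ⊗ a = A ⊗ b.
Proof. intros hA [-> | ->]; auto using magnitude_mul_opp. Qed.

Lemma precise_abs_max b c : precise b -> precise c ->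
  exists m, precise m /\ b ≼ m /\ opp b ≼ m /\ c ≼ m /\ opp c ≼ m /\
    forall A, magnitude A -> A ⊗ m ≼ A ⊗ b ⊕ A ⊗ c.
Proof.
  intros hb hc.
  destruct (precise_abs b hb) as [a1 [h1 [h1p [h1b h1b']]]].
  destruct (precise_abs c hc) as [a2 [h2 [h2p [h2c h2c']]]].
  destruct (le_total a1 a2) as [h|h].
  - exists a2. repeat split; eauto using le_trans, precise_of_abs.
    intros A hA. rewrite (magnitude_mul_abs A a2 c hA h2).
    apply magnitude_le_add_r; auto using magnitude_mul_l.
  - exists a1. repeat split; eauto using le_trans, precise_of_abs.
    intros A hA. rewrite (magnitude_mul_abs A a1 b hA h1).
    apply magnitude_le_add_l; auto using magnitude_mul_l.
Qed.

Section RelativeUncertaintyDistributivity.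
Hypothesis relunc_distr : forall x y z : T,
  x ⊗ y ⊕ x ⊗ z = x ⊗ (y ⊕ z) <->
  (e x ⊗ (y ⊕ z) = e x ⊗ y ⊕ e x ⊗ z \/ R x ≼ R y ⊕ R z).

Lemma zero_mul_add_magnitude b B : precise b -> magnitude B -> zero ⊗ (b ⊕ B) = zero ⊗ B.
Proof.
  intros hb hB. destruct (classic (b = zero)) as [h|h]; [now rewrite h, zero_add |].
  assert (hbz : zeroless b) by (unfold zeroless; now rewrite hb).
  assert (hd : zero ⊗ b ⊕ zero ⊗ B = zero ⊗ (b ⊕ B)).
  { apply relunc_distr. right.
    rewrite (relunc_magnitude zero magnitude_zero), (relunc_magnitude B hB),
      (relunc_zeroless b hbz), (E3 Hsolid). apply le_refl. }
  now rewrite <- hd, zero_mul_precise, zero_add.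
Qed.

Lemma zero_mul_add y z : zero ⊗ (y ⊕ z) = zero ⊗ y ⊕ zero ⊗ z.
Proof.
  destruct (E5 Hsolid y) as [b [hy hb]]. destruct (E5 Hsolid z) as [c [hz hc]].
  assert (hbc : precise (b ⊕ c)) by (unfold precise; rewrite e_add, hb, hc; apply zero_add).
  rewrite hy, hz, add_add_add_comm, (zero_mul_add_magnitude (b ⊕ c)),
    (zero_mul_add_magnitude b), (zero_mul_add_magnitude c);
    auto using magnitude_e, magnitude_add, mul_add_magnitude.
Qed.

Lemma precise_mul_add p y z : precise p -> p ⊗ y ⊕ p ⊗ z = p ⊗ (y ⊕ z).
Proof. intro hp. apply relunc_distr. left. rewrite hp. apply zero_mul_add. Qed.

Lemma precise_add_self m : precise m -> m ⊕ m = m ⊗ two.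
Proof. intro hm. unfold two. rewrite <- precise_mul_add, mul_one; auto. Qed.

Lemma u_precise_eq_one_add_e k : precise k -> k <> zero -> u k = one ⊕ e (u k).
Proof.
  intros hk hk0. assert (hkz : zeroless k) by (unfold zeroless; now rewrite hk).
  assert (hc : u k ⊕ opp one = e (u k)).
  { pose proof (precise_mul_add k (u k) (opp one) hk) as h.
    rewrite mul_u, mul_opp_r, mul_one, add_opp, hk in h; auto.
    destruct (classic (u k ⊕ opp one = e (u k ⊕ opp one))) as [h2|h2].
    - now rewrite h2, e_add, e_opp, e_one, add_zero.
    - exfalso. apply (proj1 (M4 Hsolid hkz h2)). rewrite <- h. symmetry. apply e_zero. }
  rewrite <- hc, add_swap, add_opp, e_one, add_zero. reflexivity.
Qed.

Lemma u_ge_one_of_relunc_distr k : precise k -> k <> zero -> one ≼ u k.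
Proof. intros hk hk0. rewrite u_precise_eq_one_add_e; auto. apply one_le_one_add_e. Qed.

(* [R B = M] for a magnitude [B], and [M] dominates every relative uncertainty. *)
Lemma mul_add_magnitude_r t w B : magnitude B -> t ⊗ w ⊕ t ⊗ B = t ⊗ (w ⊕ B).
Proof.
  intro hB. apply relunc_distr. right. rewrite (relunc_magnitude B hB).
  pose proof (magnitude_relunc u_ge_one_of_relunc_distr) as hR.
  pose proof (E3 Hsolid (R w)) as h. rewrite (hR w) in h. rewrite h.
  apply magnitude_le_bigM; auto using u_ge_one_of_relunc_distr.
Qed.

Lemma u_two : u two = one.
Proof.
  assert (he : e (u two) = zero).
  { apply magnitude_eq_zero_of_mul_two; [apply magnitude_e |].
    apply le_antisym; [rewrite <- precise_two; apply e_u_mul_le_e, zeroless_two |].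
    apply zero_le_magnitude, magnitude_e_mul. }
  rewrite u_precise_eq_one_add_e, he, add_zero; auto using precise_two.
  intro h. apply zeroless_two. rewrite h. symmetry. apply e_zero.
Qed.

Lemma two_mul_inv_two : two ⊗ inv two = one.
Proof. rewrite mul_inv, u_two; auto using zeroless_two. Qed.

Lemma precise_inv_two : precise (inv two).
Proof.
  apply magnitude_eq_zero_of_mul_two; [apply magnitude_e |].
  apply le_antisym; [| apply zero_le_magnitude, magnitude_e_mul].
  pose proof (e_mul two (inv two)) as h.
  rewrite two_mul_inv_two, e_one, precise_two in h. rewrite h.
  apply magnitude_le_add_r; [apply magnitude_mul_l, magnitude_zero | apply magnitude_e_mul].
Qed.

(* [k/2] is precise and absorbed by [(D 2)/2 = D], and [k = k/2 + k/2]. *)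
Lemma add_magnitude_of_add_mul_two k D :
  precise k -> magnitude D -> k ⊕ D ⊗ two = D ⊗ two -> k ⊕ D = D.
Proof.
  intros hk hD hkD2. set (h := inv two).
  assert (hhD : h ⊗ (D ⊗ two) = D).
  { unfold h. rewrite (mul_comm D two), mul_assoc, (mul_comm _ two), two_mul_inv_two.
    apply one_mul. }
  assert (hhk : h ⊗ k ⊕ D = D).
  { rewrite <- hhD at 1. rewrite precise_mul_add, hkD2; [exact hhD | apply precise_inv_two]. }
  assert (hek : precise (h ⊗ k)).
  { unfold precise, h.
    rewrite e_mul, precise_inv_two, hk, !zero_mul_precise; auto using precise_inv_two.
    apply zero_add. }
  assert (hkk : h ⊗ k ⊕ h ⊗ k = k).
  { rewrite precise_add_self; auto. unfold h.
    rewrite (mul_comm _ k), <- mul_assoc, (mul_comm _ two), two_mul_inv_two. apply mul_one. }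
  rewrite <- hkk, <- add_assoc, hhk. exact hhk.
Qed.

Lemma magnitude_mul_two_le D : magnitude D -> D ⊗ two ≼ D.
Proof.
  intro hD. assert (hD2 : magnitude (D ⊗ two)) by now apply magnitude_mul_l.
  destruct (le_total (D ⊗ two) D) as [hl|hl]; auto.
  destruct (classic (D = D ⊗ two)) as [he|hne]; [rewrite <- he; apply le_refl | exfalso].
  destruct (precise_absorbed_between D (D ⊗ two) hD hD2 (conj hl hne)) as [k [hk [hkD2 hkD]]].
  exact (hkD (add_magnitude_of_add_mul_two k D hk hD hkD2)).
Qed.

(* With [m = max (|b|, |c|)]: [A (b + c) <= A (2 m) = (A m) 2 <= A m]. *)
Lemma magnitude_mul_add_le_precise A b c : magnitude A -> precise b -> precise c ->
  A ⊗ (b ⊕ c) ≼ A ⊗ b ⊕ A ⊗ c.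
Proof.
  intros hA hb hc.
  destruct (precise_abs_max b c hb hc) as [m [hm [hbm [hbm' [hcm [hcm' hAm]]]]]].
  assert (hbc : precise (b ⊕ c)) by (unfold precise; rewrite e_add, hb, hc; apply zero_add).
  destruct (precise_abs (b ⊕ c) hbc) as [s [hs [hs0 _]]].
  assert (hsm : s ≼ m ⊕ m).
  { destruct hs as [-> | ->]; [| rewrite opp_add];
      (eapply le_trans; [apply add_le_mono_r; eassumption | apply add_le_mono_l; eassumption]). }
  rewrite <- (magnitude_mul_abs A s (b ⊕ c) hA hs).
  pose proof (O5 Hsolid A s (m ⊕ m)) as h. rewrite hA, (precise_of_abs s _ hbc hs) in h.
  eapply le_trans; [now apply h |].
  rewrite precise_add_self, mul_assoc; auto.
  eapply le_trans; [apply magnitude_mul_two_le, magnitude_mul_l, hA | now apply hAm].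
Qed.

Lemma magnitude_mul_add_le_of_relunc_distr A y z :
  magnitude A -> A ⊗ (y ⊕ z) ≼ A ⊗ y ⊕ A ⊗ z.
Proof.
  intro hA. destruct (E5 Hsolid y) as [b [hy hb]]. destruct (E5 Hsolid z) as [c [hz hc]].
  assert (hB : magnitude (e y)) by apply magnitude_e.
  assert (hC : magnitude (e z)) by apply magnitude_e.
  assert (hAy : A ⊗ y = A ⊗ b ⊕ A ⊗ e y)
    by (rewrite hy at 1; symmetry; now apply mul_add_magnitude_r).
  assert (hAz : A ⊗ z = A ⊗ c ⊕ A ⊗ e z)
    by (rewrite hz at 1; symmetry; now apply mul_add_magnitude_r).
  assert (hAyz : A ⊗ (y ⊕ z) = A ⊗ (b ⊕ c) ⊕ (A ⊗ e y ⊕ A ⊗ e z)).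
  { rewrite hy at 1. rewrite hz at 1. rewrite add_add_add_comm, <- (mul_add_magnitude A (e y));
      auto. symmetry. apply mul_add_magnitude_r, magnitude_add; auto. }
  rewrite hAy, hAz, hAyz, (add_add_add_comm (A ⊗ b)).
  apply magnitude_add_le; auto using magnitude_mul_l, magnitude_add.
  - eapply le_trans; [now apply magnitude_mul_add_le_precise |].
    apply magnitude_le_add_l; auto using magnitude_mul_l, magnitude_add.
  - apply magnitude_le_add_r; auto using magnitude_mul_l, magnitude_add.
Qed.

Lemma weak_distr_of_relunc_distr x y z :
  x ⊗ y ⊕ x ⊗ z = x ⊗ (y ⊕ z) ⊕ e x ⊗ y ⊕ e x ⊗ z.
Proof.
  destruct (E5 Hsolid x) as [a [hx ha]].
  assert (hA : magnitude (e x)) by apply magnitude_e.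
  assert (hsplit : forall w, x ⊗ w = a ⊗ w ⊕ e x ⊗ w).
  { intro w. rewrite hx at 1. rewrite mul_comm, <- mul_add_magnitude_r, !(mul_comm w); auto. }
  rewrite !hsplit, <- (precise_mul_add a y z ha), add_add_add_comm, <- !add_assoc.
  do 2 f_equal. symmetry.
  apply magnitude_le_iff;
    auto using magnitude_mul_l, magnitude_add, magnitude_mul_add_le_of_relunc_distr.
Qed.

End RelativeUncertaintyDistributivity.

End SolidWithoutDistributivity.

Theorem mainTheorem2 (T : Type) (add mul : T -> T -> T) (le : T -> T -> Prop)
  (e opp u inv : T -> T) (zero one bigM : T) :
  solid_without_AM4 add mul le e opp u inv zero one bigM ->
  ((forall x y z : T,
      add (mul x y) (mul x z) = mul x (add y z) <->
      (mul (e x) (add y z) = add (mul (e x) y) (mul (e x) z) \/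
       le (relunc e u bigM x)
          (add (relunc e u bigM y) (relunc e u bigM z))))
   <->
   (forall x y z : T,
      add (mul x y) (mul x z) =
      add (add (mul x (add y z)) (mul (e x) y)) (mul (e x) z))).
Proof.
  intro Hsolid. split.
  - intros relunc_distr x y z. eapply weak_distr_of_relunc_distr; eassumption.
  - intros weak_distr x y z. eapply mul_add_eq_iff_relunc; eassumption.
Qed.
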